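(* Let $d=(L,Z)$ be a pure Euler diagram such that for each missing zone $z\in M(d)$ there is a contour $\ell\in L$ with $\mathrm{adj}(z,\ell)\in M(d)$, and let $L'=\{c\in L\mid M(d\setminus c)\neq\emptyset\}$. Then for every Heyting algebra and every valuation $v$, $\bigwedge_{c\in L'}[\![d\setminus c]\!]_v=[\![d]\!]_v$.
   Context: Fix a countably infinite set $\mathcal V$ of propositional variables. A Heyting algebra $(H,\vee,\wedge,\to,0,1)$ is a bounded distributive lattice with a binary operation $\to$ such that $c\wedge a\le b\iff c\le a\to b$; empty meets are $1$, empty joins are $0$. A valuation is a map $v:\mathcal V\to H$. For a finite $L\subset\mathcal V$, a zone over $L$ is a pair $z=(\mathrm{in}(z),\mathrm{out}(z))$ of disjoint subsets of $L$ with union $L$; $\mathcal Z(L)$ is the set of all zones over $L$. Missing-zone semantics: $m_v(z)=\big(\bigwedge_{c\in\mathrm{in}(z)}v(c)\big)\to\big(\bigvee_{c\in\mathrm{out}(z)}v(c)\big)$. A pure Euler diagram is $d=(L,Z)$ with $Z\subseteq\mathcal Z(L)$; its missing zones are $M(d)=\mathcal Z(L)\setminus Z$ and $[\![d]\!]_v=\bigwedge_{z\in M(d)}m_v(z)$. For $c\in L$, $\mathrm{adj}(z,c)$ is the zone obtained from $z$ by moving $c$ from $\mathrm{out}(z)$ to $\mathrm{in}(z)$ or from $\mathrm{in}(z)$ to $\mathrm{out}(z)$. Reduction: $z\setminus c=(\mathrm{in}(z)\setminus\{c\},\mathrm{out}(z)\setminus\{c\})$ and $d\setminus c=(L\setminus\{c\},\{z\setminus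 c: z\in Z\})$, a pure Euler diagram over $L\setminus\{c\}$. *)

From HB Require Import structures.
From mathcomp Require Import all_boot all_order.
From mathcomp Require Import finmap.

Set Implicit Arguments.
Unset Strict Implicit.
Unset Printing Implicit Defensive.

Local Open Scope fset_scope.

Definition var := nat.

(* Heyting algebra: a bounded distributive lattice (MathComp's
   tbDistrLatticeType) with an operation imp satisfying the adjunction
   c /\ a <= b  <->  c <= a -> b. *)
Definition heyting_imp (disp : Order.disp_t) (H : tbDistrLatticeType disp)
  (imp : H -> H -> H) : Prop :=
  forall a b c : H, (Order.meet c a <= b)%O = (c <= imp a b)%O.

Definition zone := ({fset var} * {fset var})%type.
Definition zin (z : zone) := z.1.
Definition zout (z : zone) := z.2.

Definition zones (L : {fset var}) : {fset zone} :=
  [fset ((A, L `\` A) : zone) | A in fpowerset L].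

Definition diagram := ({fset var} * {fset zone})%type.
Definition dlab (d : diagram) := d.1.
Definition dzones (d : diagram) := d.2.
Definition is_diagram (d : diagram) : bool := dzones d `<=` zones (dlab d).

Definition missing (d : diagram) : {fset zone} := zones (dlab d) `\` dzones d.

Definition adj (z : zone) (c : var) : zone :=
  if c \in zin z then (zin z `\ c, c |` zout z) else (c |` zin z, zout z `\ c).

Definition reduce_zone (z : zone) (c : var) : zone := (zin z `\ c, zout z `\ c).
Definition reduce (d : diagram) (c : var) : diagram :=
  (dlab d `\ c, [fset reduce_zone z c | z in dzones d]).

Definition mzone (disp : Order.disp_t) (H : tbDistrLatticeType disp)
  (imp : H -> H -> H) (v : var -> H) (z : zone) : H :=
  imp (\big[Order.meet/Order.top]_(c <- zin z) v c)
      (\big[Order.join/Order.bottom]_(c <- zout z) v c).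

Definition sem (disp : Order.disp_t) (H : tbDistrLatticeType disp)
  (imp : H -> H -> H) (v : var -> H) (d : diagram) : H :=
  \big[Order.meet/Order.top]_(z <- missing d) mzone imp v z.

From HB Require Import structures.
From mathcomp Require Import all_boot all_order.
From mathcomp Require Import finmap.

(* A missing zone (I, O) of d \ c has the two lifts (c + I, O) and (I, c + O)
   over L, and both are missing in d; cutting on v c in the Heyting algebra,
   ((c /\ I) -> O) /\ (I -> (c \/ O)) <= (I -> O), gives [[d]] <= [[d \ c]]
   for every contour c.  Conversely, if z and adj(z, l) are both missing in d,
   no zone of d reduces to z \ l, so z \ l is missing in d \ l (whence l is in
   L') and [[d \ l]] <= m(z \ l) <= m(z), since dropping a contour weakens
   both sides of the implication. *)

Set Implicit Arguments.
Unset Strict Implicit.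
Unset Printing Implicit Defensive.

Local Open Scope fset_scope.
Import Order.LTheory.

Lemma zonesP (L : {fset var}) (z : zone) :
  reflect (zin z `<=` L /\ zout z = L `\` zin z) (z \in zones L).
Proof.
case: z => A B; rewrite /zones /zin /zout /=.
apply: (iffP idP) => [/imfsetP [X] /= | [sAL ->]].
  by rewrite fpowersetE => sXL [-> ->].
by apply/imfsetP; exists A => //=; rewrite fpowersetE.
Qed.

Lemma zones_eq (L : {fset var}) (z w : zone) :
  z \in zones L -> w \in zones L -> zin z = zin w -> z = w.
Proof.
case: z w => [A B] [A' B'] /zonesP [_ /= ->] /zonesP [_ /= ->] /= eAA'.
by rewrite /zin /= in eAA'; rewrite eAA'.
Qed.

Lemma adj_zones (L : {fset var}) (z : zone) (c : var) :
  c \in L -> z \in zones L -> adj z c \in zones L.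
Proof.
move=> cL /zonesP [sAL eB]; apply/zonesP; rewrite /adj eB.
case: ifP => cA; split => /=.
- by apply: fsubset_trans sAL; apply: fsubD1set.
- apply/fsetP => x; rewrite !inE.
  by case: eqVneq => [-> | _] /=; rewrite ?cA ?cL ?andbT ?andbF.
- by rewrite fsubUset fsub1set cL.
- apply/fsetP => x; rewrite !inE.
  by case: eqVneq => [-> | _] /=; rewrite ?cA ?andbT ?andbF.
Qed.

Lemma reduce_zones (L : {fset var}) (z : zone) (c : var) :
  z \in zones L -> reduce_zone z c \in zones (L `\ c).
Proof.
case: z => A B /zonesP [sAL eB]; rewrite /zin /zout /= in sAL eB.
apply/zonesP; rewrite /reduce_zone /zin /zout /= eB.
split; first by rewrite fsetSD.
by apply/fsetP => x; rewrite !inE; case: eqVneq.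
Qed.

Lemma reduce_zone_eq (L : {fset var}) (c : var) (z w : zone) :
    c \in L -> z \in zones L -> w \in zones L ->
  reduce_zone w c = reduce_zone z c -> w = z \/ w = adj z c.
Proof.
move=> cL zL wL [/fsetP eD _].
have same x : x != c -> (x \in zin w) = (x \in zin z).
  by move=> xc; move: (eD x); rewrite !inE xc.
have [ec | nec] := eqVneq (c \in zin w) (c \in zin z).
  left; apply: (zones_eq wL zL); apply/fsetP => x.
  by case: (eqVneq x c) => [-> | /same].
right; apply: (zones_eq wL (adj_zones cL zL)); apply/fsetP => x.
rewrite /adj; case: ifP nec => cz nec /=; rewrite !inE;
  case: (eqVneq x c) => [-> | /same] //=; by case: (c \in zin w) nec.
Qed.

Lemma zones_lift (L I O : {fset var}) (c : var) :
    c \in L -> (I, O) \in zones (L `\ c) ->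
  [/\ c \notin I, c \notin O, (c |` I, O) \in zones L & (I, c |` O) \in zones L].
Proof.
move=> cL /zonesP []; rewrite /zin /zout /= => sI ->.
have cI : c \notin I by apply/negP => /(fsubsetP sI); rewrite !inE eqxx.
have sIL : I `<=` L by apply: fsubset_trans sI (fsubD1set _ _).
split => //; first by rewrite !inE eqxx andbF.
- apply/(zonesP L (_, _)); rewrite /zin /zout /=.
  by rewrite fsubUset fsub1set cL sIL fsetDDl.
- apply/(zonesP L (_, _)); rewrite /zin /zout /=; split => //.
  apply/fsetP => x; rewrite !inE.
  by case: eqVneq => [-> | _] /=; rewrite ?cL ?(negbTE cI).
Qed.

Lemma in_missing (d : diagram) z :
  (z \in missing d) = (z \in zones (dlab d)) && (z \notin dzones d).
Proof. by rewrite /missing !inE andbC. Qed.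

Lemma missing_lift (d : diagram) c z : z \in zones (dlab d) ->
  reduce_zone z c \in missing (reduce d c) -> z \in missing d.
Proof.
rewrite !in_missing => -> /andP [_ nZ] /=.
by apply: contra nZ => zZ; apply: in_imfset.
Qed.

Lemma reduce_missing (d : diagram) c z : is_diagram d -> c \in dlab d ->
  z \in missing d -> adj z c \in missing d ->
  reduce_zone z c \in missing (reduce d c).
Proof.
move=> Hd cL; rewrite !in_missing => /andP [zL zZ] /andP [_ azZ].
rewrite reduce_zones //=; apply/imfsetP => -[w /= wZ ew].
have wL : w \in zones (dlab d) := fsubsetP Hd w wZ.
by case: (reduce_zone_eq cL zL wL (esym ew)) => ew'; rewrite -ew' wZ in zZ azZ.
Qed.

Section Heyting.

Variables (disp : Order.disp_t) (H : tbDistrLatticeType disp) (imp : H -> H -> H).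
Hypothesis Himp : heyting_imp imp.

Local Open Scope order_scope.

Lemma imp_mp a b : imp a b `&` a <= b.
Proof. by rewrite Himp. Qed.

Lemma le_imp a b a' b' : a' <= a -> b <= b' -> imp a b <= imp a' b'.
Proof.
move=> le_a le_b; rewrite -Himp; apply: le_trans le_b.
by apply: le_trans (imp_mp a b); apply: leI2.
Qed.

Lemma imp_cut c a b : imp (c `&` a) b `&` imp a (c `|` b) <= imp a b.
Proof.
rewrite -Himp; set x := imp (c `&` a) b; set y := imp a (c `|` b).
have y_mp : y `&` a <= c `|` b := imp_mp a (c `|` b).
have x_cb : x `&` y `&` a <= x `&` a `&` (c `|` b).
  rewrite lexI -meetA leI2 ?leIr //=.
  by apply: le_trans y_mp; rewrite leIr.
apply: le_trans x_cb _; rewrite meetUr leUx leIr andbT.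
by rewrite -meetA (meetC a) imp_mp.
Qed.

Variable v : var -> H.

Lemma mzone_le z a b :
  (forall x, x \in zin z -> a <= v x) -> (forall x, x \in zout z -> v x <= b) ->
  mzone imp v z <= imp a b.
Proof.
move=> ha hb; apply: le_imp.
  by apply/meetsP_seq => x xz _; apply: ha.
by apply/joinsP_seq => x xz _; apply: hb.
Qed.

Lemma mzone_sub z1 z2 : zin z1 `<=` zin z2 -> zout z1 `<=` zout z2 ->
  mzone imp v z1 <= mzone imp v z2.
Proof.
move=> /fsubsetP s_in /fsubsetP s_out; rewrite [X in _ <= X]/mzone.
apply: mzone_le => x xz.
- exact: meets_inf_seq (s_in _ xz) _.
- exact: joins_sup_seq (s_out _ xz) _.
Qed.

Lemma mzone_cut c I O :
  mzone imp v (c |` I, O) `&` mzone imp v (I, c |` O) <= mzone imp v (I, O).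
Proof.
apply: le_trans (imp_cut (v c) _ _); apply: leI2.
all: apply: mzone_le => x; rewrite /zin /zout /= => xz.
- move: xz; rewrite !inE => /orP [/eqP -> | xI]; first exact: leIl.
  exact: le_trans (leIr _ _) (meets_inf_seq _ xI _).
- exact: joins_sup_seq.
- exact: meets_inf_seq.
- move: xz; rewrite !inE => /orP [/eqP -> | xO]; first exact: leUl.
  exact: le_trans (joins_sup_seq _ xO _) (leUr _ _).
Qed.

Lemma sem_le_mzone (d : diagram) z :
  z \in missing d -> sem imp v d <= mzone imp v z.
Proof. by move=> zm; rewrite /sem (meets_inf_seq _ zm). Qed.

Lemma sem_le_reduce (d : diagram) c :
  c \in dlab d -> sem imp v d <= sem imp v (reduce d c).
Proof.
move=> cL; apply/meetsP_seq => -[I O] z'm _.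
move: (z'm); rewrite in_missing => /andP [z'L _].
have [cI cO z1L z2L] := zones_lift cL z'L.
have lift_missing z :
    z \in zones (dlab d) -> reduce_zone z c = (I, O) -> z \in missing d.
  by move=> zL ez; apply: (missing_lift (c := c) zL); rewrite ez.
apply: le_trans (mzone_cut c I O); rewrite lexI !sem_le_mzone ?lift_missing //.
all: by rewrite /reduce_zone /zin /zout /= fsetU1K ?mem_fsetD1.
Qed.

Lemma sem_reduce_le_mzone (d : diagram) c z : is_diagram d -> c \in dlab d ->
  z \in missing d -> adj z c \in missing d ->
  sem imp v (reduce d c) <= mzone imp v z.
Proof.
move=> Hd cL zm azm; apply: le_trans (sem_le_mzone (reduce_missing Hd cL zm azm)) _.
by apply: mzone_sub; apply: fsubD1set.
Qed.

End Heyting.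

Theorem lemma5 (disp : Order.disp_t) (H : tbDistrLatticeType disp)
  (imp : H -> H -> H) (Himp : heyting_imp imp)
  (d : diagram) (Hd : is_diagram d)
  (Hadj : forall z, z \in missing d ->
            exists2 l, l \in dlab d & adj z l \in missing d)
  (v : var -> H) :
  \big[Order.meet/Order.top]_(c <- [fset c | c in dlab d & missing (reduce d c) != fset0])
     sem imp v (reduce d c)
  = sem imp v d.
Proof.
apply/le_anti/andP; split.
- apply/meetsP_seq => z zm _; have [l lL azm] := Hadj z zm.
  have l_red : l \in [fset c | c in dlab d & missing (reduce d c) != fset0].
    by rewrite !inE lL; apply/fset0Pn; exists (reduce_zone z l); apply: reduce_missing.
  apply: le_trans (meets_inf_seq _ l_red _) _ => //.
  exact: sem_reduce_le_mzone.
- apply/meetsP_seq => c; rewrite !inE => /andP [cL _] _.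
  exact: sem_le_reduce.
Qed.
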